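(* Let $M$ be a smooth manifold, $H$ a closed $3$-form, and $L\subset\mathbb TM=TM\oplus T^*M$ a Dirac structure of the exact Courant algebroid with Dorfman bracket $[[\cdot,\cdot]]=[[\cdot,\cdot]]^H$. Let $E\to M$ be a vector bundle, $D=\nabla+V$ a generalized connection on $E$, and $\nabla^K$ an affine connection on $M$. Then the restriction to $L$ of the $K$-curvature $R^K_D$ equals the curvature of the $L$-connection $D|_L$, i.e. $R^K_D(a,b)=[D_a,D_b]-D_{[[a,b]]}$ for all $a,b\in\Gamma(L)$, if and only if $\langle V,\phi^{KL}\rangle=0$, i.e. $V_{\phi^{KL}(a,b)}=0$ for all $a,b\in\Gamma(L)$. Moreover, if $E=\mathbb TM$ and $D$ preserves $L$ (i.e. $D_ab\in\Gamma(L)$ for all $a,b\in\Gamma(L)$), then the restriction to $L$ of the $K$-torsion $T^K_D$ equals the torsion of $D|_L$, i.e. $T^K_D(a,b)=D_ab-D_ba-[[a,b]]$ for all $a,b\in\Gamma(L)$, if and only if $\phi^{KL}=0$.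
   Context: Exact Courant algebroid: $\mathbb TM=TM\oplus T^*M$ with pairing $\langle X+\xi,Y+\eta\rangle=\eta(X)+\xi(Y)$, anchor the projection to $TM$, and Dorfman bracket $[[X+\xi,Y+\eta]]^H=L_X(Y+\eta)-\iota_Yd\xi+\iota_Y\iota_XH$. A Dirac structure is a maximal isotropic subbundle $L\subset\mathbb TM$ whose sections are closed under $[[\cdot,\cdot]]$; it is a Lie algebroid with the restricted bracket. Write $\rho:L\to TM$ and $\rho_{T^*}:L\to T^*M$ for the two projections. A generalized connection on $E$ is $D=\nabla+V$ with $\nabla$ a connection on $E$ and $V\in\Gamma(TM\otimes\mathrm{End}\,E)$, acting by $D_{X+\xi}=\nabla_X+V_\xi$ ($V_\xi$ = contraction of $V$ with $\xi$). For the affine connection $\nabla^K$ (extended to $T^*M$ by duality), define $\phi^{KL}\in\Gamma(\Lambda^2L^*\otimes T^*M)$ by $\phi^{KL}(a,b)=\rho_{T^*}([[a,b]])+\nabla^K_{\rho(b)}(\rho_{T^*}(a))-\nabla^K_{\rho(a)}(\rho_{T^*}(b))$. The $K$-curvature $R^K_D\in\Gamma(\Lambda^2\mathbb TM\otimes\mathrm{End}\,E)$ is $R^K_D(X+\xi,Y+\eta)=R_\nabla(X,Y)+(\nabla^{K}_XV)_\eta-(\nabla^{K}_YV)_\xi+[V_\xi,V_\eta]$, where $R_\nabla$ is the curvature of $\nabla$ and $(\nabla^K_XV)_\eta=\nabla_X\circ V_\eta-V_\eta\circ\nabla_X-V_{\nabla^K_X\eta}$ is the covariant derivative of $V$ with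 respect to the connection on $TM\otimes\mathrm{End}\,E$ induced by $\nabla^K$ and $\nabla$. When $E=\mathbb TM$ (so $\nabla$ is a connection on $\mathbb TM$), the $K$-torsion $T^K_D\in\Gamma(\Lambda^2\mathbb TM\otimes\mathbb TM)$ is $T^K_D(X+\xi,Y+\eta)=T_\nabla(X,Y)+T_V(\xi,\eta)+T^{(1,1)}(X,\eta)-T^{(1,1)}(Y,\xi)$, where $T_\nabla(X,Y)=\nabla_XY-\nabla_YX-[X,Y]$ (Lie bracket of vector fields), $T_V(\xi,\eta)=V_\xi\eta-V_\eta\xi$, and $T^{(1,1)}(X,\eta)=\nabla_X\eta-\nabla^K_X\eta-V_\eta X$. *)

(* Algebraic (Lie--Rinehart) model of the smooth setting:
   A  = C^oo(M)  (a commutative ring),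
   X  = Gamma(TM) (an A-module), with the anchor action  act x f = x(f)  and the
        Lie bracket br of vector fields,
   1-forms = A-linear maps X -> A  (Gamma(T^*M) = Hom_A(Gamma(TM), A)),
   Gamma(TM + T^*M) = pairs (x, xi) with xi an A-linear form,
   tensors are multilinear maps. *)
From HB Require Import structures.
From mathcomp Require Import all_boot all_algebra.
Set Implicit Arguments. Unset Strict Implicit. Unset Printing Implicit Defensive.
Import GRing.Theory.
Local Open Scope ring_scope.

Section Defs.
Variables (A : comPzRingType) (X : lmodType A).
Variable act : X -> A -> A.
Variable br  : X -> X -> X.

Definition lie_rinehart : Prop :=
  ( (forall (a : A) x y f, act (a *: x + y) f = a * act x f + act y f) /\
      (forall x f g, act x (f + g) = act x f + act x g) /\
      (forall x f g, act x (f * g) = f * act x g + g * act x f) /\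
      (forall x y z, br (x + y) z = br x z + br y z) /\
      (forall x y, br x y = - br y x) /\
      (forall x y z, br x (br y z) = br (br x y) z + br y (br x z)) /\
      (forall x (f : A) y, br x (f *: y) = f *: br x y + act x f *: y) /\
      (forall x y f, act (br x y) f = act x (act y f) - act y (act x f))).

Definition lin_form (xi : X -> A) : Prop :=
  forall (a : A) x y, xi (a *: x + y) = a * xi x + xi y.

Definition zero_form : X -> A := fun _ => 0.

Definition closed_3form (H : X -> X -> X -> A) : Prop :=
  [/\ (forall (a : A) x x' y z, H (a *: x + x') y z = a * H x y z + H x' y z),
      (forall x y z, H x y z = - H y x z),
      (forall x y z, H x y z = - H x z y) &
      (forall w x y z,
         act w (H x y z) - act x (H w y z) + act y (H w x z) - act z (H w x y)
         - H (br w x) y z + H (br w y) x z - H (br w z) x y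
         - H (br x y) w z + H (br x z) w y - H (br y z) w x = 0)].

Definition TT := (X * (X -> A))%type.

Definition is_sec (a : TT) : Prop := lin_form a.2.

Definition TTadd (a b : TT) : TT := (a.1 + b.1, fun z => a.2 z + b.2 z).
Definition TTopp (a : TT) : TT := (- a.1, fun z => - a.2 z).
Definition TTscale (f : A) (a : TT) : TT := (f *: a.1, fun z => f * a.2 z).
Definition TTzero : TT := (0, zero_form).

Definition pairing (a b : TT) : A := b.2 a.1 + a.2 b.1.

Definition lieD (x : X) (eta : X -> A) : X -> A :=
  fun z => act x (eta z) - eta (br x z).
Definition contr_d (y : X) (xi : X -> A) : X -> A :=
  fun z => act y (xi z) - act z (xi y) - xi (br y z).

(* Dorfman bracket [[X+xi, Y+eta]]^H = L_X(Y+eta) - iota_Y d xi + iota_Y iota_X H *)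
Definition dorfman (H : X -> X -> X -> A) (a b : TT) : TT :=
  (br a.1 b.1, fun z => lieD a.1 b.2 z - contr_d b.1 a.2 z + H a.1 b.1 z).

(* Dirac structure: L is (the module of sections of) a maximal isotropic
   subbundle, closed under the Dorfman bracket. *)
Definition dirac (H : X -> X -> X -> A) (L : TT -> Prop) : Prop :=
  ( (forall a, L a -> is_sec a) /\
      L TTzero /\
      (forall a b, L a -> L b -> L (TTadd a b)) /\
      (forall f a, L a -> L (TTscale f a)) /\
      (forall a b, L a -> L b -> pairing a b = 0) /\
      (forall c, is_sec c -> (forall a, L a -> pairing c a = 0) -> L c) /\
      (forall a b, L a -> L b -> L (dorfman H a b))).

(* A module of sections, given by its operations and a predicate singling out
   the genuine sections. *)
Record modops := ModOps {
  mcar :> Type; madd : mcar -> mcar -> mcar; mopp : mcar -> mcar;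
  mscale : A -> mcar -> mcar; msec : mcar -> Prop }.

Definition lmod_ops (E : lmodType A) : modops :=
  @ModOps E +%R -%R *:%R (fun _ => True).

Definition TT_ops : modops := @ModOps TT TTadd TTopp TTscale is_sec.

Definition msub (E : modops) (e e' : E) : E := madd e (mopp e').

Definition is_connection (E : modops) (nab : X -> E -> E) : Prop :=
  [/\ (forall x e, msec e -> msec (nab x e)),
      (forall (a : A) x y e, msec e ->
         nab (a *: x + y) e = madd (mscale a (nab x e)) (nab y e)),
      (forall x e e', msec e -> msec e' -> nab x (madd e e') = madd (nab x e) (nab x e')) &
      (forall x (f : A) e, msec e ->
         nab x (mscale f e) = madd (mscale f (nab x e)) (mscale (act x f) e))].

(* V in Gamma(TM (x) End E): V_xi e, tensorial in xi and in e *)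
Definition is_VTensor (E : modops) (V : (X -> A) -> E -> E) : Prop :=
  [/\ (forall xi e, lin_form xi -> msec e -> msec (V xi e)),
      (forall (a : A) xi eta e, lin_form xi -> lin_form eta -> msec e ->
         V (fun z => a * xi z + eta z) e = madd (mscale a (V xi e)) (V eta e)),
      (forall xi e e', lin_form xi -> msec e -> msec e' ->
         V xi (madd e e') = madd (V xi e) (V xi e')) &
      (forall xi (f : A) e, lin_form xi -> msec e -> V xi (mscale f e) = mscale f (V xi e))].

Definition is_gen_connection (E : modops) (nab : X -> E -> E) (V : (X -> A) -> E -> E) :=
  is_connection nab /\ is_VTensor V.

Definition Dgen (E : modops) (nab : X -> E -> E) (V : (X -> A) -> E -> E) (a : TT) (e : E) : E :=
  madd (nab a.1 e) (V a.2 e).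

Definition is_affine_connection (nK : X -> X -> X) : Prop :=
  [/\ (forall (a : A) x y z, nK (a *: x + y) z = a *: nK x z + nK y z),
      (forall x y z, nK x (y + z) = nK x y + nK x z) &
      (forall x (f : A) y, nK x (f *: y) = f *: nK x y + act x f *: y)].

Definition dualK (nK : X -> X -> X) (x : X) (xi : X -> A) : X -> A :=
  fun y => act x (xi y) - xi (nK x y).

(* phi^{KL}(a,b) = rho_T*([[a,b]]) + nabla^K_{rho b} rho_T*(a) - nabla^K_{rho a} rho_T*(b) *)
Definition phiKL (H : X -> X -> X -> A) (nK : X -> X -> X) (a b : TT) : X -> A :=
  fun z => (dorfman H a b).2 z + dualK nK b.1 a.2 z - dualK nK a.1 b.2 z.

Section Curv.
Variables (E : modops) (nab : X -> E -> E) (V : (X -> A) -> E -> E).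

Definition Rnab (x y : X) (e : E) : E :=
  msub (msub (nab x (nab y e)) (nab y (nab x e))) (nab (br x y) e).

Definition covV (nK : X -> X -> X) (x : X) (eta : X -> A) (e : E) : E :=
  msub (msub (nab x (V eta e)) (V eta (nab x e))) (V (dualK nK x eta) e).

Definition RK (nK : X -> X -> X) (a b : TT) (e : E) : E :=
  madd (msub (madd (Rnab a.1 b.1 e) (covV nK a.1 b.2 e)) (covV nK b.1 a.2 e))
       (msub (V a.2 (V b.2 e)) (V b.2 (V a.2 e))).

Definition curvL (H : X -> X -> X -> A) (a b : TT) (e : E) : E :=
  msub (msub (Dgen nab V a (Dgen nab V b e)) (Dgen nab V b (Dgen nab V a e)))
       (Dgen nab V (dorfman H a b) e).
End Curv.

Section Tors.
Variables (nab : X -> TT -> TT) (V : (X -> A) -> TT -> TT).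

Definition inT (x : X) : TT := (x, zero_form).
Definition inTs (xi : X -> A) : TT := (0, xi).

Definition Tnab (x y : X) : TT :=
  msub (E := TT_ops) (msub (E := TT_ops) (nab x (inT y)) (nab y (inT x))) (inT (br x y)).
Definition TV (xi eta : X -> A) : TT :=
  msub (E := TT_ops) (V xi (inTs eta)) (V eta (inTs xi)).
Definition T11 (nK : X -> X -> X) (x : X) (eta : X -> A) : TT :=
  msub (E := TT_ops) (msub (E := TT_ops) (nab x (inTs eta)) (inTs (dualK nK x eta)))
       (V eta (inT x)).

Definition TK (nK : X -> X -> X) (a b : TT) : TT :=
  msub (E := TT_ops)
    (TTadd (TTadd (Tnab a.1 b.1) (TV a.2 b.2)) (T11 nK a.1 b.2)) (T11 nK b.1 a.2).

Definition torsL (H : X -> X -> X -> A) (a b : TT) : TT :=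
  msub (E := TT_ops)
    (msub (E := TT_ops) (Dgen (E := TT_ops) nab V a b) (Dgen (E := TT_ops) nab V b a))
    (dorfman H a b).
End Tors.

End Defs.

(* For a = x + xi and b = y + eta with xi, eta and the form part of [[a, b]]
   linear, expanding D = nabla + V makes every term cancel except those where
   the bracket or nabla^K acts on the cotangent parts, and these assemble into
   phi^{KL}(a, b):
     R^K_D(a, b) = [D_a, D_b] - D_{[[a,b]]} + V_{phi^{KL}(a,b)},
     T^K_D(a, b) = D_a b - D_b a - [[a,b]] + phi^{KL}(a,b),
   the latter as an element of T^*M.  Both equivalences follow at once. *)

From HB Require Import structures.
From mathcomp Require Import all_boot all_algebra ring.
From Stdlib Require Import FunctionalExtensionality.

Set Implicit Arguments. Unset Strict Implicit. Unset Printing Implicit Defensive.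
Import GRing.Theory.
Local Open Scope ring_scope.

(* Closes an identity in a zmodType whose two sides are the same signed sum of
   atoms up to order: each atom is moved next to its negation and cancelled. *)
Ltac cancel_summand t :=
  rewrite ?(addrAC _ t) ?(addrAC _ (- t)) addrK.

Ltac cancel_summands :=
  apply/eqP; rewrite -subr_eq0 -[_ - _]add0r ?opprD ?opprK !addrA;
  repeat match goal with |- context [- ?t] => cancel_summand t end;
  by rewrite ?add0r.

Lemma addr_eq_id (V : zmodType) (x y : V) : x + y = x <-> y = 0.
Proof.
split=> [/eqP|->]; last exact: addr0.
by rewrite -subr_eq0 addrAC subrr add0r => /eqP.
Qed.

Section LinearForms.
Variables (A : comPzRingType) (X : lmodType A).

Lemma lin_formD (xi : X -> A) u v : lin_form xi -> xi (u + v) = xi u + xi v.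
Proof. by move=> lxi; rewrite -[u]scale1r lxi mul1r scale1r. Qed.

Lemma lin_form0 (xi : X -> A) : lin_form xi -> xi 0 = 0.
Proof. by move=> lxi; apply: (@addrI _ (xi 0)); rewrite -lin_formD // !addr0. Qed.

Lemma lin_formZ (xi : X -> A) c u : lin_form xi -> xi (c *: u) = c * xi u.
Proof. by move=> lxi; rewrite -[c *: u]addr0 lxi lin_form0 // addr0. Qed.

Lemma lin_form_sum (xi eta : X -> A) :
  lin_form xi -> lin_form eta -> lin_form (fun z => xi z + eta z).
Proof. by move=> lxi leta c u v; rewrite lxi leta; ring. Qed.

Lemma lin_form_zero : lin_form (zero_form (X := X)).
Proof. by move=> c u v; rewrite /zero_form; ring. Qed.

Variables (act : X -> A -> A) (br : X -> X -> X) (nK : X -> X -> X).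
Hypotheses (LR : lie_rinehart act br) (affK : is_affine_connection act nK).

Lemma lin_form_dualK x (xi : X -> A) : lin_form xi -> lin_form (dualK act nK x xi).
Proof.
case: LR => _ [actD [actM _]]; case: affK => _ nKD nKM lxi c u v.
rewrite /dualK lxi actD actM nKD nKM !lin_formD // !lin_formZ //; ring.
Qed.

End LinearForms.

Section GeneralizedTangent.
Variables (A : comPzRingType) (X : lmodType A).

Lemma TT_ext (a b : TT X) : a.1 = b.1 -> a.2 =1 b.2 -> a = b.
Proof.
by case: a b => x xi [y eta] /= -> /functional_extensionality ->.
Qed.

Lemma TT_decompose (a : TT X) : a = TTadd (inT a.1) (inTs a.2).
Proof. by apply: TT_ext => [|z] /=; rewrite ?addr0 ?add0r. Qed.

Lemma is_sec_inT (x : X) : is_sec (inT x).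
Proof. exact: lin_form_zero. Qed.

Lemma TTadd_inTs_id (a : TT X) xi : TTadd a (inTs xi) = a <-> forall z, xi z = 0.
Proof.
split=> [e z | e]; first exact/addr_eq_id/(congr1 (fun t => t.2 z) e).
by apply: TT_ext => [|z] /=; rewrite ?e addr0.
Qed.

End GeneralizedTangent.

Section Curvature.
Variables (A : comPzRingType) (X : lmodType A).
Variables (act : X -> A -> A) (br : X -> X -> X).
Variables (H : X -> X -> X -> A) (nK : X -> X -> X).
Hypotheses (LR : lie_rinehart act br) (affK : is_affine_connection act nK).
Variables (E : lmodType A) (nab : X -> E -> E) (V : (X -> A) -> E -> E).
Hypothesis nabD : forall x e e', nab x (e + e') = nab x e + nab x e'.
Hypothesis V_form_linear : forall c xi eta e, lin_form xi -> lin_form eta ->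
  V (fun z => c * xi z + eta z) e = c *: V xi e + V eta e.
Hypothesis VD : forall xi e e', lin_form xi -> V xi (e + e') = V xi e + V xi e'.

Lemma V_formD xi eta e : lin_form xi -> lin_form eta ->
  V (fun z => xi z + eta z) e = V xi e + V eta e.
Proof.
move=> lxi leta; rewrite -[V xi e]scale1r -V_form_linear //.
by congr V; apply: functional_extensionality => z; rewrite mul1r.
Qed.

Lemma V_formB xi eta e : lin_form xi -> lin_form eta ->
  V (fun z => xi z - eta z) e = V xi e - V eta e.
Proof.
move=> lxi leta; rewrite addrC -scaleN1r -V_form_linear //.
by congr V; apply: functional_extensionality => z; rewrite mulN1r addrC.
Qed.

Lemma V_phiKL a b e :
  is_sec a -> is_sec b -> is_sec (dorfman act br H a b) ->
  V (phiKL act br H nK a b) e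
  = V (dorfman act br H a b).2 e + V (dualK act nK b.1 a.2) e
    - V (dualK act nK a.1 b.2) e.
Proof.
move=> la lb ld; have lKa := lin_form_dualK LR affK b.1 la.
have lKb := lin_form_dualK LR affK a.1 lb.
rewrite (@V_formB (fun z => _ + _) (dualK act nK a.1 b.2)) //; last exact: lin_form_sum.
by rewrite (@V_formD (dorfman act br H a b).2).
Qed.

Lemma RK_eq_curvL_add_V_phiKL a b e :
  is_sec a -> is_sec b -> is_sec (dorfman act br H a b) ->
  RK act br (E := lmod_ops E) nab V nK a b e
  = curvL act br (E := lmod_ops E) nab V H a b e + V (phiKL act br H nK a b) e.
Proof.
move=> la lb ld; rewrite V_phiKL //.
case: a la ld => x xi la; case: b lb => y eta lb ld.
rewrite /RK /curvL /Rnab /covV /Dgen /msub /= !nabD !VD //.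
cancel_summands.
Qed.

End Curvature.

Section Torsion.
Variables (A : comPzRingType) (X : lmodType A).
Variables (act : X -> A -> A) (br : X -> X -> X).
Variables (H : X -> X -> X -> A) (nK : X -> X -> X).
Variables (nab : X -> TT X -> TT X) (V : (X -> A) -> TT X -> TT X).
Hypothesis nabD : forall x e e', is_sec e -> is_sec e' ->
  nab x (TTadd e e') = TTadd (nab x e) (nab x e').
Hypothesis VD : forall xi e e', lin_form xi -> is_sec e -> is_sec e' ->
  V xi (TTadd e e') = TTadd (V xi e) (V xi e').

Lemma TK_eq_torsL_add_phiKL a b : is_sec a -> is_sec b ->
  TK act br nab V nK a b
  = TTadd (torsL act br nab V H a b) (inTs (phiKL act br H nK a b)).
Proof.
move=> la lb; have sa := is_sec_inT a.1; have sb := is_sec_inT b.1.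
rewrite /torsL /Dgen [in nab a.1 b](TT_decompose b) [in V a.2 b](TT_decompose b).
rewrite [in nab b.1 a](TT_decompose a) [in V b.2 a](TT_decompose a) !nabD ?VD //.
apply: TT_ext => [|z] /=; last by rewrite /phiKL /dorfman /zero_form /=; ring.
rewrite !subr0 addr0; cancel_summands.
Qed.

End Torsion.

Theorem proposition5p2
  (A : comPzRingType) (X : lmodType A) (act : X -> A -> A) (br : X -> X -> X)
  (H : X -> X -> X -> A) (L : TT X -> Prop) (nK : X -> X -> X) :
  lie_rinehart act br ->
  closed_3form act br H ->
  dirac act br H L ->
  is_affine_connection act nK ->
  (forall (E : lmodType A) (nab : X -> E -> E) (V : (X -> A) -> E -> E),
     is_gen_connection act (E := lmod_ops E) nab V ->
     (forall a b : TT X, L a -> L b -> forall e : E,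
        RK act br (E := lmod_ops E) nab V nK a b e
        = curvL act br (E := lmod_ops E) nab V H a b e)
     <->
     (forall a b : TT X, L a -> L b -> forall e : E,
        V (phiKL act br H nK a b) e = 0))
  /\
  (forall (nab : X -> TT X -> TT X) (V : (X -> A) -> TT X -> TT X),
     is_gen_connection act (E := TT_ops X) nab V ->
     (forall a b : TT X, L a -> L b -> L (Dgen (E := TT_ops X) nab V a b)) ->
     (forall a b : TT X, L a -> L b ->
        TK act br nab V nK a b = torsL act br nab V H a b)
     <->
     (forall a b : TT X, L a -> L b -> forall z : X,
        phiKL act br H nK a b z = 0)).
Proof.
move=> LR _ [Lsec [_ [_ [_ [_ [_ Ldorf]]]]]] affK; split.
  move=> E nab V [[_ _ nabD _] [_ Vlin VD _]].
  have defect a b e : L a -> L b -> RK act br (E := lmod_ops E) nab V nK a b e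
      = curvL act br (E := lmod_ops E) nab V H a b e + V (phiKL act br H nK a b) e.
    move=> La Lb; apply: RK_eq_curvL_add_V_phiKL => //.
    - by move=> *; apply: nabD.
    - by move=> *; apply: Vlin.
    - by move=> *; apply: VD.
    - exact: Lsec.
    - exact: Lsec.
    - exact/Lsec/Ldorf.
  by split=> h a b La Lb e; have := h a b La Lb e; rewrite defect // addr_eq_id.
move=> nab V [[_ _ nabD _] [_ _ VD _]] _.
have defect a b : L a -> L b -> TK act br nab V nK a b
    = TTadd (torsL act br nab V H a b) (inTs (phiKL act br H nK a b)).
  by move=> La Lb; apply: TK_eq_torsL_add_phiKL => //; apply: Lsec.
by split=> h a b La Lb; have := h a b La Lb; rewrite defect // TTadd_inTs_id.
Qed.
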